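(* Let $\delta\in(0,1)$, $k\ge2$, let $G=S_k$ be the star with hub $h$ and $k$ leaves on vertex set $V$ ($n=k+1$ vertices), and $\mathcal H=\{\{i,j\}:\{i,j\}\in E(S_k)\}$. Suppose that one of the sender $S$, receiver $R$ is the hub and the other is a leaf, and the witness set is $W=V\setminus\{S,R\}$ (the remaining $k-1$ leaves). Then $$b_{\mathrm{eff}}=\delta+f(k,\delta),\qquad f(k,\delta)=\frac{2(k+1)(k-1)}{3k}\,\delta^2,$$ where $f>0$, $\partial f/\partial k>0$ and $\partial^2 f/\partial k^2<0$ (viewing $k$ as a real variable $\ge 1$). Hence the number of equilibrium partitions $N(b_{\mathrm{eff}})$ is non-increasing in $n$, and the marginal increase of $b_{\mathrm{eff}}$ from adding a witness diminishes as $n\to\infty$.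
   Context: For a finite simple undirected graph $G=(V,E)$ and $\delta\in(0,1)$: $v^G(S):=\sum_{i\in S}\sum_{j\in S,\,j\neq i}\delta^{t_{ij}(G[S])}$ for $S\subseteq V$, where $t_{ij}(G[S])$ is the distance in the induced subgraph ($\infty$ if disconnected, $\delta^\infty:=0$). For a conference structure $\mathcal H$ and $C\subseteq V$, $C/\mathcal H$ is the partition of $C$ into classes connected via chains of pairwise-intersecting members of $\mathcal H$ contained in $C$; $r^{v^G}_{\mathcal H}(C):=\sum_{B\in C/\mathcal H}v^G(B)$; for $X\subseteq V$, $\mathcal H|_X:=\{H\in\mathcal H:H\subseteq X\}$. $\mu_j(X;u)$ denotes the Shapley value of player $j$ in the TU game $u$ on player set $X$. Bargaining-power components: $b^j_i:=\mu_j(V;r^{v^G}_{\mathcal H})-\mu_j(V\setminus\{i\};r^{v^G}_{\mathcal H|_{V\setminus\{i\}}})$. Effective bias with sender $S$, receiver $R$, witness set $W$: $b_{\mathrm{eff}}:=\bigl(b^S_R+\sum_{w\in W}(b^S_w+b^w_R)\bigr)/(|W|+1)$. For $b>0$, $N(b)$ denotes the unique integer $N\ge1$ with $\beta(N)\le b<\beta(N-1)$, where $\beta(N)=\frac1{2N(N+1)}$ and $\beta(0)=+\infty$; $N$ is non-increasing in $b$. *)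

From HB Require Import structures.
From mathcomp Require Import all_boot all_order all_algebra.
From mathcomp Require Import all_classical all_reals all_analysis.
Set Implicit Arguments. Unset Strict Implicit. Unset Printing Implicit Defensive.
Import Order.TTheory GRing.Theory Num.Theory.
Local Open Scope ring_scope.

Section Defs.
Variable R : realType.
Variable T : finType.

Fixpoint walkn (e : rel T) (S : {set T}) (n : nat) (i j : T) : bool :=
  match n with
  | 0 => (i \in S) && (i == j)
  | n'.+1 => (i \in S) && [exists k, e i k && walkn e S n' k j]
  end.

(* delta^(t_ij(G[S])), with t_ij the distance in G[S] (the least n with a
   walk of length n), and delta^oo = 0 when i, j are disconnected in G[S].
   Distances in a graph on #|T| vertices are < #|T|. *)
Definition dpow (delta : R) (e : rel T) (S : {set T}) (i j : T) : R :=
  let m := find (fun n => walkn e S n i j) (iota 0 #|T|) in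
  if (m < #|T|)%N then delta ^+ m else 0.

Definition vG (delta : R) (e : rel T) (S : {set T}) : R :=
  \sum_(i in S) \sum_(j in S | j != i) dpow delta e S i j.

Definition hrel (Hs : {set {set T}}) (C : {set T}) : rel T :=
  fun x y => [exists H in Hs, [&& H \subset C, x \in H & y \in H]].

(* C/Hs : classes of C connected via chains of pairwise-intersecting
   members of Hs contained in C (uncovered points are singleton classes) *)
Definition cpart (Hs : {set {set T}}) (C : {set T}) : {set {set T}} :=
  [set [set y | connect (hrel Hs C) x y] | x in C].

Definition rgame (delta : R) (e : rel T) (Hs : {set {set T}}) (C : {set T}) : R :=
  \sum_(B in cpart Hs C) vG delta e B.

Definition restrictH (Hs : {set {set T}}) (X : {set T}) : {set {set T}} :=
  [set H in Hs | H \subset X].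

Definition shapley (j : T) (X : {set T}) (u : {set T} -> R) : R :=
  \sum_(S in powerset (X :\ j))
     (((#|S|)`! * (#|X| - #|S| - 1)`!)%:R / ((#|X|)`!)%:R) * (u (j |: S) - u S).

Definition bcomp (delta : R) (e : rel T) (Hs : {set {set T}}) (j i : T) : R :=
  shapley j [set: T] (rgame delta e Hs)
  - shapley j (~: [set i]) (rgame delta e (restrictH Hs (~: [set i]))).

Definition beff (delta : R) (e : rel T) (Hs : {set {set T}}) (S Rc : T)
    (W : {set T}) : R :=
  (bcomp delta e Hs S Rc
   + \sum_(w in W) (bcomp delta e Hs S w + bcomp delta e Hs w Rc))
  / (#|W|.+1)%:R.

Definition star_rel (h : T) : rel T :=
  fun x y => ((x == h) && (y != h)) || ((y == h) && (x != h)).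

Definition star_H (h : T) : {set {set T}} :=
  [set [set x; y] | x in T, y in T & star_rel h x y].

Definition hub_leaf (h S Rc : T) : bool :=
  ((S == h) && (Rc != h)) || ((Rc == h) && (S != h)).

Definition beff_star (delta : R) (h S Rc : T) : R :=
  beff delta (star_rel h) (star_H h) S Rc (~: [set S; Rc]).

End Defs.

(* beta(N) = 1/(2N(N+1)) for N >= 1, beta(0) = +oo *)
Definition betaN (R : realType) (N : nat) : R := ((2 * N * N.+1)%N%:R)^-1.

Definition isN (R : realType) (b : R) (N : nat) : Prop :=
  (1 <= N)%N /\ betaN R N <= b /\ (N = 1%N \/ b < betaN R N.-1).

Definition fkd (R : realType) (k delta : R) : R :=
  2 * (k + 1) * (k - 1) / (3 * k) * delta ^+ 2.

From HB Require Import structures.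
From mathcomp Require Import all_boot all_order all_algebra.
From mathcomp Require Import all_classical all_reals all_analysis.
From mathcomp Require Import zify ring lra.
Import Order.TTheory GRing.Theory Num.Theory.
Local Open Scope ring_scope.
Set Implicit Arguments. Unset Strict Implicit. Unset Printing Implicit Defensive.

(* On a star every coalition without the hub h splits into singletons and is
   worth nothing, while a coalition containing h is connected; so the
   conference game r is a "hub game", determined by whether h is present and by
   the worth 2m delta + m(m-1) delta^2 of a star with m leaves.  Summing over
   coalition sizes, in a star with m leaves the hub's Shapley value is
   m delta + m(m-1) delta^2 / 3 and a leaf's is delta + 2(m-1) delta^2 / 3 (a
   leaf gets nothing once the hub is removed).  Hence b^h_i = b^j_h =
   delta + 2(k-1) delta^2 / 3 and b^j_i = 2 delta^2 / 3 for leaves i, j, and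
   averaging over the k - 1 witnesses gives b_eff = delta + f(k, delta).  As
   f(k, delta) = 2 delta^2 / 3 * (k - 1/k), the analytic claims are elementary,
   and N(b) is antitone because beta is decreasing. *)

Section PowersetSums.
Variables (V : nmodType) (T : finType).

Lemma sum_powerset_card (A : {set T}) (F : nat -> V) :
  \sum_(S in powerset A) F #|S| = \sum_(s < #|A|.+1) F s *+ 'C(#|A|, s).
Proof.
rewrite (partition_big (fun S : {set T} => inord #|S| : 'I_#|A|.+1) xpredT) //=.
apply: eq_bigr => s _; rewrite -cards_draws -sumr_const.
apply: eq_big => [S|S /andP[SA /eqP <-]]; last first.
  by rewrite inordK // ltnS subset_leq_card // -powersetE.
rewrite inE powersetE; case SA: (S \subset A) => //=.
apply/eqP/eqP => [<-|->]; last by apply/val_inj; rewrite /= inordK.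
by rewrite inordK // ltnS subset_leq_card.
Qed.

Lemma sum_powerset_setD1 (A : {set T}) (h : T) (F : {set T} -> V) : h \in A ->
  \sum_(S in powerset A) F S = \sum_(S in powerset (A :\ h)) (F S + F (h |: S)).
Proof.
move=> hA; rewrite big_split /= (bigID (fun S : {set T} => h \in S)) /= addrC.
congr (_ + _).
  by apply: eq_bigl => S; rewrite !powersetE subsetD1; case: (S \subset A).
rewrite (reindex_onto (fun S => h |: S) (fun S => S :\ h)) /=; last first.
  by move=> S /andP[_ hS]; rewrite finset.setD1K.
apply: eq_bigl => S; rewrite !powersetE setU11 andbT.
apply/andP/idP => [[hSA /eqP <-]|SA]; first exact: finset.setSD.
move: SA; rewrite subsetD1 => /andP[SA hS].
by rewrite finset.subUset finset.sub1set hA SA finset.setU1K.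
Qed.

End PowersetSums.

Section ShapleyHubGame.
Variables (R : realType) (T : finType).
Implicit Types (g : nat -> R) (h j : T) (X : {set T}).

Definition shapley_weight (n s : nat) : R := (s`! * (n - s - 1)`!)%:R / (n`!)%:R.

Lemma shapleyE j X (u : {set T} -> R) : shapley j X u =
  \sum_(S in powerset (X :\ j)) shapley_weight #|X| #|S| * (u (j |: S) - u S).
Proof. by []. Qed.

Lemma shapley_weightE n s : (s < n)%N ->
  shapley_weight n s = (n%:R * 'C(n.-1, s)%:R)^-1.
Proof.
case: n => // n; rewrite ltnS => sn.
rewrite /shapley_weight; have -> : (n.+1 - s - 1 = n - s)%N by lia.
rewrite factS -(bin_fact sn) !natrM /=.
have fs : s`!%:R != 0 :> R by rewrite pnatr_eq0 -lt0n fact_gt0.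
have fns : (n - s)`!%:R != 0 :> R by rewrite pnatr_eq0 -lt0n fact_gt0.
have bns : 'C(n, s)%:R != 0 :> R by rewrite pnatr_eq0 -lt0n bin_gt0.
by field; rewrite fs fns bns nat1r pnatr_eq0.
Qed.

Lemma shapley_weight_binom m s : (s <= m)%N ->
  shapley_weight m.+1 s *+ 'C(m, s) = m.+1%:R^-1.
Proof.
move=> sm; have bms : 'C(m, s)%:R != 0 :> R by rewrite pnatr_eq0 -lt0n bin_gt0.
by rewrite shapley_weightE //= -mulr_natr; field; rewrite bms nat1r pnatr_eq0.
Qed.

Lemma shapley_weightS_binom m s : (s <= m)%N ->
  shapley_weight m.+2 s.+1 *+ 'C(m, s) = s.+1%:R / (m.+2%:R * m.+1%:R).
Proof.
move=> sm; have bms : 'C(m, s)%:R != 0 :> R by rewrite pnatr_eq0 -lt0n bin_gt0.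
have diag : 'C(m.+1, s.+1)%:R = (m.+1%:R * 'C(m, s)%:R / s.+1%:R : R).
  by rewrite -natrM mul_bin_diag natrM; field; rewrite nat1r pnatr_eq0.
by rewrite shapley_weightE //= -mulr_natr diag; field; rewrite bms !nat1r -natrD !pnatr_eq0.
Qed.

Lemma eq_shapley j X (u v : {set T} -> R) : j \in X ->
  (forall C : {set T}, C \subset X -> u C = v C) -> shapley j X u = shapley j X v.
Proof.
move=> jX uv; apply: eq_bigr => S; rewrite powersetE => SXj.
have SX : S \subset X := fintype.subset_trans SXj (finset.subD1set X j).
by rewrite !uv // finset.subUset finset.sub1set jX.
Qed.

Definition hub_game g h (C : {set T}) : R := if h \in C then g #|C|.-1 else 0.

Lemma shapley_hub_game_hub g h X : h \in X ->
  shapley h X (hub_game g h) = #|X|%:R^-1 * \sum_(s < #|X|) g s.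
Proof.
move=> hX; have cardX : #|X| = #|X :\ h|.+1 by rewrite (cardsD1 h X) hX.
rewrite shapleyE (eq_bigr (fun S : {set T} => shapley_weight #|X| #|S| * g #|S|)); last first.
  move=> S; rewrite powersetE => SXh.
  have hS : h \notin S by apply/negP => /(fintype.subsetP SXh); rewrite !inE eqxx.
  by rewrite /hub_game setU11 (negbTE hS) cardsU1 hS subr0.
rewrite (sum_powerset_card _ (fun s => shapley_weight #|X| s * g s)) cardX mulr_sumr.
apply: eq_bigr => s _; have sm : (s <= #|X :\ h|)%N := ltn_ord s.
by rewrite -mulrnAl (shapley_weight_binom sm).
Qed.

Lemma shapley_hub_game_leaf g h j X m : h \in X -> j \in X -> j != h ->
  #|X| = m.+2 -> shapley j X (hub_game g h) =
  (m.+2%:R * m.+1%:R)^-1 * \sum_(s < m.+1) s.+1%:R * (g s.+1 - g s).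
Proof.
move=> hX jX jh cardX.
have hXj : h \in X :\ j by rewrite !inE eq_sym jh hX.
have cardXjh : #|X :\ j :\ h| = m.
  by move: cardX; rewrite (cardsD1 j X) jX (cardsD1 h (X :\ j)) hXj => -[].
rewrite shapleyE (sum_powerset_setD1 _ hXj).
rewrite (eq_bigr (fun S : {set T} =>
    shapley_weight #|X| #|S|.+1 * (g #|S|.+1 - g #|S|))); last first.
  move=> S; rewrite powersetE => SXjh.
  have [hS jS] : h \notin S /\ j \notin S.
    by split; apply/negP => /(fintype.subsetP SXjh); rewrite !inE eqxx ?andbF.
  have jhS : j \notin h |: S by rewrite !inE negb_or jh jS.
  rewrite /hub_game !inE (negbTE hS) orbF eq_sym (negbTE jh) subrr mulr0 add0r.
  by rewrite !eqxx orbT /= (cardsU1 j) jhS (cardsU1 h) hS.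
rewrite (sum_powerset_card _ (fun s => shapley_weight #|X| s.+1 * (g s.+1 - g s))).
rewrite cardXjh cardX mulr_sumr; apply: eq_bigr => s _.
have sm : (s <= m)%N := ltn_ord s.
by rewrite -mulrnAl (shapley_weightS_binom sm) mulrA [_ * _^-1]mulrC.
Qed.

Lemma shapley_hub_game_nohub g h j X : h \notin X -> j \in X ->
  shapley j X (hub_game g h) = 0.
Proof.
move=> hX jX; rewrite (eq_shapley (v := fun=> 0) jX).
  by rewrite shapleyE big1 // => S _; rewrite subrr mulr0.
move=> C CX; rewrite /hub_game ifF //.
by apply: negbTE; apply: contra hX; apply: (fintype.subsetP CX).
Qed.
End ShapleyHubGame.

Section HubCentredConference.
Variables (T : finType) (h : T) (Hs : {set {set T}}).
Hypothesis hub_mem : forall H, H \in Hs -> h \in H.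

Lemma hrel_sym (C : {set T}) : symmetric (hrel Hs C).
Proof. by move=> x y; apply/existsP/existsP => -[H /and4P[*]]; exists H; apply/and4P. Qed.

Lemma hrel_mem (C : {set T}) x y :
  hrel Hs C x y -> [&& h \in C, x \in C & y \in C].
Proof.
case/existsP => H /andP[HHs /and3P[HC xH yH]].
by rewrite !(fintype.subsetP HC) ?hub_mem.
Qed.

Lemma connect_hrel_mem (C : {set T}) x y :
  x \in C -> connect (hrel Hs C) x y -> y \in C.
Proof.
move=> xC /connectP[p + ->]; elim: p x xC => //= z p IH x xC /andP[/hrel_mem].
by case/and3P => _ _; apply: IH.
Qed.

Lemma connect_hrel_hub_notin (C : {set T}) x y :
  h \notin C -> connect (hrel Hs C) x y -> y = x.
Proof.
move=> hC /connectP[[|z p] //= /andP[/hrel_mem /andP[hC' _] _]].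
by rewrite hC' in hC.
Qed.

Lemma cpart_hub_mem (C : {set T}) : h \in C ->
  (forall z, z \in C -> z != h -> [set h; z] \in Hs) -> cpart Hs C = [set C].
Proof.
move=> hC spoke.
have to_hub z : z \in C -> connect (hrel Hs C) z h.
  move=> zC; have [->|zh] := eqVneq z h; first exact: connect0.
  apply/connect1/existsP; exists [set h; z].
  rewrite spoke // !inE !eqxx orbT !andbT.
  by apply/fintype.subsetP => w /set2P[]->.
have class_C x : x \in C -> [set y | connect (hrel Hs C) x y] = C.
  move=> xC; apply/setP => y; rewrite inE.
  apply/idP/idP => [|yC]; first exact: connect_hrel_mem.
  by apply: connect_trans (to_hub x xC) _; rewrite (sym_connect_sym (@hrel_sym C)) to_hub.
apply/setP => B; rewrite !inE; apply/imsetP/eqP => [[x xC ->]|->].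
  exact: class_C.
by exists h => //; rewrite class_C.
Qed.

End HubCentredConference.

Section Distances.
Variables (R : realType) (T : finType) (delta : R) (e : rel T) (S : {set T}).

Lemma walkn1 i j : walkn e S 1 i j = [&& i \in S, e i j & j \in S].
Proof.
rewrite /=; case: (i \in S) => //=.
apply/existsP/andP => [[k /and3P[eik kS /eqP <-]]|[eij jS]]; first by split.
by exists j; rewrite eij jS eqxx.
Qed.

Lemma dpow_dist d i j : (d < #|T|)%N -> walkn e S d i j ->
  (forall n, (n < d)%N -> ~~ walkn e S n i j) -> dpow delta e S i j = delta ^+ d.
Proof.
move=> dT walk_d no_shorter; rewrite /dpow.
set p := fun n => walkn e S n i j.
have has_p : has p (iota 0 #|T|).
  by apply/hasP; exists d; rewrite ?mem_iota.
have := nth_find 0 has_p; have := @before_find _ 0 p (iota 0 #|T|).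
rewrite has_find size_iota in has_p.
move: (find p _) has_p => m mT before_m walk_m.
rewrite nth_iota // add0n in walk_m.
have [dm|md|<-] := ltngtP d m; last by rewrite dT.
- by move: (before_m d dm); rewrite nth_iota ?(ltn_trans dm mT) // add0n /p walk_d.
- by case/negP: (no_shorter m md).
Qed.

Lemma vG_set1 x : vG delta e [set x] = 0.
Proof.
rewrite /vG big1 // => i /set1P ->; rewrite big1 // => j /andP[/set1P ->].
by rewrite eqxx.
Qed.

End Distances.

Section Star.
Variables (R : realType) (T : finType) (delta : R) (h : T).
Hypothesis card_T : (2 < #|T|)%N.

Lemma star_relE i j : i != j -> star_rel h i j = (i == h) || (j == h).
Proof.
move=> ij; rewrite /star_rel; have [hi|_] := eqVneq h i; last by rewrite /= andbT.
by subst i; rewrite /= eq_sym ij.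
Qed.

Lemma dpow_star (C : {set T}) i j : h \in C -> i \in C -> j \in C -> i != j ->
  dpow delta (star_rel h) C i j = if (i == h) || (j == h) then delta else delta ^+ 2.
Proof.
move=> hC iC jC ij.
have walk0 : walkn (star_rel h) C 0 i j = false by rewrite /= (negbTE ij) andbF.
have walk1 : walkn (star_rel h) C 1 i j = (i == h) || (j == h).
  by rewrite walkn1 iC jC star_relE // andbT.
case: ifPn => [hub|/norP[ih jh]].
  rewrite -[X in _ = X]expr1.
  by apply: dpow_dist => [||[|//] _]; rewrite ?walk0 ?walk1 ?(ltnW card_T).
apply: dpow_dist => [//||[|[|]] //]; rewrite ?walk0 ?walk1 ?(negbTE ih) ?(negbTE jh) //.
rewrite /= iC; apply/existsP; exists h; rewrite star_relE // eqxx orbT hC /=.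
by apply/existsP; exists j; rewrite star_relE 1?eq_sym // !eqxx jC.
Qed.

(* [2m] ordered hub-leaf pairs at distance 1 and [m(m-1)] leaf pairs at distance 2. *)
Definition star_worth (m : nat) : R :=
  2 * m%:R * delta + m%:R * (m%:R - 1) * delta ^+ 2.

Lemma sum_dpow_star (C : {set T}) i : h \in C -> i \in C ->
  \sum_(j in C | j != i) dpow delta (star_rel h) C i j =
  if i == h then delta *+ #|C :\ h| else delta + delta ^+ 2 *+ #|C :\ h|.-1.
Proof.
move=> hC iC.
rewrite (eq_bigr (fun j => if (i == h) || (j == h) then delta else delta ^+ 2));
  last by move=> j /andP[jC ji]; rewrite dpow_star // eq_sym.
have [ih|ih] := eqVneq i h.
  rewrite -sumr_const; apply: eq_big => [j|//]; by rewrite !inE andbC ih.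
rewrite (bigD1 h) /=; last by rewrite hC eq_sym ih.
rewrite eqxx; congr (_ + _).
have -> : #|C :\ h|.-1 = #|C :\ h :\ i| by rewrite (cardsD1 i (C :\ h)) !inE ih iC.
rewrite -sumr_const; apply: eq_big => [j|j /andP[_ /negbTE ->]] //.
by rewrite !inE; case: (j \in C); case: (j == i); case: (j == h).
Qed.

Lemma vG_star (C : {set T}) : h \in C ->
  vG delta (star_rel h) C = star_worth #|C|.-1.
Proof.
move=> hC; rewrite /vG (bigD1 h) //= sum_dpow_star // eqxx.
rewrite (eq_bigl (fun i => i \in C :\ h)) => [|i]; last by rewrite !inE andbC.
rewrite (eq_bigr (fun=> delta + delta ^+ 2 *+ #|C :\ h|.-1)) => [|i]; last first.
  by rewrite !inE => /andP[ih iC]; rewrite sum_dpow_star // (negbTE ih).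
rewrite sumr_const (cardsD1 h C) hC add1n /star_worth /=.
case: #|C :\ h| => [|m]; first by rewrite !mulr0n !(mul0r, mulr0, addr0).
rewrite /= -[delta *+ _]mulr_natr -[delta ^+ 2 *+ _]mulr_natr -[(_ + _) *+ _]mulr_natr.
by ring.
Qed.

Lemma rgame_hub_centred (Hs : {set {set T}}) (C : {set T}) :
  (forall H, H \in Hs -> h \in H) ->
  (h \in C -> forall z, z \in C -> z != h -> [set h; z] \in Hs) ->
  rgame delta (star_rel h) Hs C = hub_game star_worth h C.
Proof.
move=> hub_mem spoke; rewrite /rgame /hub_game; case: ifPn => hC.
  by rewrite (cpart_hub_mem hub_mem hC (spoke hC)) big_set1 vG_star.
apply: big1 => B /imsetP[x xC ->].
rewrite (_ : [set y | _] = [set x]) ?vG_set1 //; apply/setP => y; rewrite !inE.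
by apply/idP/eqP => [/(connect_hrel_hub_notin hub_mem hC)|->].
Qed.

Lemma star_H_hub_mem H : H \in star_H h -> h \in H.
Proof.
case/imset2P => x y _; rewrite inE /star_rel => /orP[] /andP[/eqP-> _] ->;
  by rewrite !inE eqxx ?orbT.
Qed.

Lemma star_H_spoke z : z != h -> [set h; z] \in star_H h.
Proof. by move=> zh; apply/imset2P; exists h z; rewrite // inE /star_rel eqxx zh. Qed.

Lemma rgame_star_H (C : {set T}) :
  rgame delta (star_rel h) (star_H h) C = hub_game star_worth h C.
Proof.
by apply: rgame_hub_centred => [H|_ z _]; [apply: star_H_hub_mem|apply: star_H_spoke].
Qed.

Lemma rgame_restrict_star_H (X C : {set T}) : C \subset X ->
  rgame delta (star_rel h) (restrictH (star_H h) X) C = hub_game star_worth h C.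
Proof.
move=> CX; apply: rgame_hub_centred => [H|hC z zC zh].
  by rewrite inE => /andP[/star_H_hub_mem].
rewrite inE star_H_spoke //=; apply/fintype.subsetP => w /set2P[]->;
  exact: (fintype.subsetP CX).
Qed.

Definition hub_share (m : nat) : R :=
  m%:R * delta + m%:R * (m%:R - 1) / 3 * delta ^+ 2.

Definition leaf_share (m : nat) : R := delta + 2 * (m%:R - 1) / 3 * delta ^+ 2.

Lemma sum_star_worth m : \sum_(s < m.+1) star_worth s = m.+1%:R * hub_share m.
Proof.
elim: m => [|m IH]; first by rewrite big_ord1 /star_worth /hub_share /= !(mul0r, mulr0, addr0).
by rewrite big_ord_recr /= IH /star_worth /hub_share -!natr1; field.
Qed.

Lemma sum_star_worth_increments m :
  \sum_(s < m) s.+1%:R * (star_worth s.+1 - star_worth s) =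
  m.+1%:R * m%:R * leaf_share m.
Proof.
elim: m => [|m IH]; first by rewrite big_ord0 mulr0 mul0r.
by rewrite big_ord_recr /= IH /star_worth /leaf_share -!natr1; field.
Qed.

Lemma hub_shareS m : hub_share m.+1 - hub_share m = leaf_share m.+1.
Proof. by rewrite /hub_share /leaf_share -natr1; field. Qed.

Lemma leaf_shareS m : leaf_share m.+1 - leaf_share m = 2 * delta ^+ 2 / 3.
Proof. by rewrite /leaf_share -natr1; field. Qed.

Lemma shapley_star_hub (X : {set T}) : h \in X ->
  shapley h X (hub_game star_worth h) = hub_share #|X|.-1.
Proof.
move=> hX; rewrite shapley_hub_game_hub // (cardsD1 h X) hX add1n sum_star_worth.
by rewrite mulrA mulVf ?mul1r // pnatr_eq0.
Qed.

Lemma shapley_star_leaf j (X : {set T}) : h \in X -> j \in X -> j != h ->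
  shapley j X (hub_game star_worth h) = leaf_share #|X|.-1.
Proof.
move=> hX jX jh; have [m cardX] : exists m, #|X| = m.+2.
  exists #|X :\ j :\ h|.
  by rewrite (cardsD1 j X) jX (cardsD1 h (X :\ j)) !inE eq_sym jh hX.
rewrite (shapley_hub_game_leaf _ hX jX jh cardX) sum_star_worth_increments cardX.
by rewrite mulrA mulVf ?mul1r // mulf_neq0 // pnatr_eq0.
Qed.

Lemma bcomp_starE j i : j != i -> bcomp delta (star_rel h) (star_H h) j i =
  shapley j [set: T] (hub_game star_worth h) -
  shapley j (~: [set i]) (hub_game star_worth h).
Proof.
move=> ji; rewrite /bcomp (eq_shapley (v := hub_game star_worth h) (finset.in_setT j));
  last by move=> C _; apply: rgame_star_H.
have jX : j \in ~: [set i] by rewrite !inE.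
by rewrite (eq_shapley (v := hub_game star_worth h) jX) // => C; apply: rgame_restrict_star_H.
Qed.

Lemma bcomp_star_hub_leaf i : i != h ->
  bcomp delta (star_rel h) (star_H h) h i = leaf_share #|T|.-1.
Proof.
move=> ih; have hX : h \in ~: [set i] by rewrite !inE eq_sym.
rewrite bcomp_starE 1?eq_sym // !shapley_star_hub // cardsT cardsC1.
by move: card_T; case: #|T| => [|[|m]] //= _; apply: hub_shareS.
Qed.

Lemma bcomp_star_leaf_hub j : j != h ->
  bcomp delta (star_rel h) (star_H h) j h = leaf_share #|T|.-1.
Proof.
move=> jh; rewrite bcomp_starE // shapley_star_leaf // cardsT.
by rewrite shapley_hub_game_nohub ?subr0 // !inE ?eqxx.
Qed.

Lemma bcomp_star_leaf_leaf j i : j != h -> i != h -> j != i ->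
  bcomp delta (star_rel h) (star_H h) j i = 2 * delta ^+ 2 / 3.
Proof.
move=> jh ih ji; have jX : j \in ~: [set i] by rewrite !inE.
have hX : h \in ~: [set i] by rewrite !inE eq_sym.
rewrite bcomp_starE // !shapley_star_leaf // cardsT cardsC1.
by move: card_T; case: #|T| => [|[|m]] //= _; apply: leaf_shareS.
Qed.

Lemma beff_star_card S Rc : hub_leaf h S Rc ->
  beff_star delta h S Rc = delta + fkd (#|T|.-1)%:R delta.
Proof.
move=> hl; have SRc : S != Rc by case/orP: hl => /andP[/eqP -> ?]; rewrite // eq_sym.
have b_SRc : bcomp delta (star_rel h) (star_H h) S Rc = leaf_share #|T|.-1.
  by case/orP: hl => /andP[/eqP -> ?]; [apply: bcomp_star_hub_leaf|apply: bcomp_star_leaf_hub].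
(* Whatever the orientation, each witness contributes one hub-leaf and one
   leaf-leaf component. *)
have b_W w : w \in ~: [set S; Rc] ->
    bcomp delta (star_rel h) (star_H h) S w + bcomp delta (star_rel h) (star_H h) w Rc =
    leaf_share #|T|.-1 + 2 * delta ^+ 2 / 3.
  rewrite !inE negb_or => /andP[wS wRc].
  case/orP: hl => /andP[/eqP hub leaf]; rewrite hub in wS wRc *.
    by rewrite (bcomp_star_hub_leaf wS) (bcomp_star_leaf_leaf wS leaf wRc).
  rewrite eq_sym in wS.
  by rewrite (bcomp_star_leaf_hub wRc) (bcomp_star_leaf_leaf leaf wRc wS) addrC.
rewrite /beff_star /beff b_SRc (eq_bigr _ b_W) sumr_const.
rewrite cardsCs finset.setCK cards2 SRc /leaf_share /fkd.
move: card_T; case: #|T| => [|[|[|n]]] //= _; rewrite !subSS subn0.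
by rewrite -[_ *+ n.+1]mulr_natr -!natr1; field; rewrite !natr1 pnatr_eq0.
Qed.

End Star.

Section SubInverse.
Variables (R : realType) (c : R).

Lemma is_derive_sub_inv (y : R) : y != 0 ->
  is_derive y 1 (fun k : R => c * (k - k^-1)) (c * (1 + y ^- 2)).
Proof.
move=> y0; have D := is_deriveZ c (is_deriveB (is_derive_id y 1)
  (@is_deriveV R id y 1 1 y0 (is_derive_id y 1))).
match type of D with is_derive _ _ ?f _ =>
  have -> : (fun k : R => c * (k - k^-1)) = f by [] end.
apply: is_derive_eq D _; change (c * (1 - - y ^- 2 * 1) = c * (1 + y ^- 2)).
by rewrite mulr1 opprK.
Qed.

Lemma is_derive_add_inv_sqr (y : R) : y != 0 ->
  is_derive y 1 (fun k : R => c * (1 + k ^- 2)) (c * (- 2 / y ^+ 3)).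
Proof.
move=> y0; have y20 : (@id R ^+ 2) y != 0 by rewrite /= mulf_neq0.
have D := is_deriveZ c (is_deriveD (is_derive_cst (1 : R) y 1)
  (@is_deriveV R _ y _ 1 y20 (is_deriveX 2 (is_derive_id y (1 : R))))).
match type of D with is_derive _ _ ?f _ =>
  have -> : (fun k : R => c * (1 + k ^- 2)) = f by [] end.
apply: is_derive_eq D _.
change (c * (0 + - (y ^+ 2) ^- 2 * ((2 * y ^+ 1) * 1)) = c * (-2 / y ^+ 3)).
by field.
Qed.

Lemma sub_inv_derivatives x : 0 < c -> 0 < x ->
  let f := fun k : R => c * (k - k^-1) in
  [/\ derivable f x 1, 0 < derive1 f x, derivable (derive1 f) x 1
    & derive1n 2 f x < 0].
Proof.
move=> c0 x0 f; have x_neq0 : x != 0 := lt0r_neq0 x0.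
have f'E y : 0 < y -> derive1 f y = c * (1 + y ^- 2).
  by move=> y0; rewrite derive1E; case: (is_derive_sub_inv (lt0r_neq0 y0)).
have f'_near : \forall y \near x, c * (1 + y ^- 2) = derive1 f y.
  by near=> y; rewrite f'E //; near: y; exact: lt_nbhsr.
split.
- by case: (is_derive_sub_inv x_neq0).
- by rewrite f'E // mulr_gt0 // addr_gt0 ?invr_gt0 ?exprn_gt0.
- by apply: (near_eq_derivable f'_near); case: (is_derive_add_inv_sqr x_neq0).
rewrite derive1nS derive1n1 derive1E -(near_eq_derive _ f'_near).
case: (is_derive_add_inv_sqr x_neq0) => _ ->.
by rewrite pmulr_rlt0 // mulNr oppr_lt0 divr_gt0 // exprn_gt0.
Unshelve. all: by end_near.
Qed.

End SubInverse.

Section ShareFunction.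
Variables (R : realType) (delta : R).

Lemma fkdE k : fkd k delta = 2 * delta ^+ 2 / 3 * (k - k^-1).
Proof.
have [->|k0] := eqVneq k 0; last by rewrite /fkd; field.
by rewrite /fkd !(mulr0, invr0, subrr, mul0r).
Qed.

Lemma fkd_gt0 x : 0 < delta -> 1 < x -> 0 < fkd x delta.
Proof.
move=> d0 x1; rewrite /fkd mulr_gt0 ?exprn_gt0 // divr_gt0 ?mulr_gt0 //; lra.
Qed.

Lemma fkd_le x y : 0 < x -> x <= y -> fkd x delta <= fkd y delta.
Proof.
move=> x0 xy; have c0 : 0 <= 2 * delta ^+ 2 / 3 by rewrite divr_ge0 // mulr_ge0 ?sqr_ge0.
rewrite !fkdE ler_wpM2l //.
have : y^-1 <= x^-1 by rewrite lef_pV2 ?posrE // (lt_le_trans x0).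
lra.
Qed.

Lemma fkd_increments_decrease x : 0 < delta -> 0 < x ->
  fkd (x + 2) delta - fkd (x + 1) delta < fkd (x + 1) delta - fkd x delta.
Proof.
move=> d0 x0; rewrite -subr_gt0 !fkdE.
have -> : 2 * delta ^+ 2 / 3 * (x + 1 - (x + 1)^-1) - 2 * delta ^+ 2 / 3 * (x - x^-1)
  - (2 * delta ^+ 2 / 3 * (x + 2 - (x + 2)^-1) - 2 * delta ^+ 2 / 3 * (x + 1 - (x + 1)^-1))
  = 4 * delta ^+ 2 / (3 * (x * (x + 1) * (x + 2))).
  by field; apply/and3P; split; apply: lt0r_neq0; lra.
by rewrite divr_gt0 ?mulr_gt0 ?exprn_gt0 //; lra.
Qed.

Lemma fkd_derivatives x : 0 < delta -> 0 < x ->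
  derivable (fun k : R => fkd k delta) x 1
  /\ 0 < derive1 (fun k : R => fkd k delta) x
  /\ derivable (derive1 (fun k : R => fkd k delta)) x 1
  /\ derive1n 2 (fun k : R => fkd k delta) x < 0.
Proof.
move=> d0 x0; have c0 : 0 < 2 * delta ^+ 2 / 3 by rewrite divr_gt0 ?mulr_gt0 ?exprn_gt0.
rewrite (_ : (fun k => fkd k delta) = fun k => 2 * delta ^+ 2 / 3 * (k - k^-1)).
  by case: (sub_inv_derivatives c0 x0).
by apply/funext => k; rewrite fkdE.
Qed.

End ShareFunction.

Lemma betaN_le (R : realType) (a b : nat) : (0 < a)%N -> (a <= b)%N ->
  betaN R b <= betaN R a.
Proof. by move=> a0 ab; rewrite /betaN lef_pV2 ?posrE ?ltr0n ?ler_nat; nia. Qed.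

Lemma isN_le (R : realType) (b1 b2 : R) N1 N2 : b1 <= b2 ->
  isN b1 N1 -> isN b2 N2 -> (N2 <= N1)%N.
Proof.
move=> b12 [N1_gt0 [beta_b1 _]] [_ [_ [->|b2_lt]]] //; rewrite leqNgt.
apply/negP => N12; have : betaN R N2.-1 <= betaN R N1.
  by apply: betaN_le; rewrite // -ltnS prednK // (leq_trans N1_gt0 (ltnW N12)).
lra.
Qed.

Theorem proposition3 (R : realType) (delta : R) (hd0 : 0 < delta) (hd1 : delta < 1) :
  (forall (k : nat) (T : finType) (h S Rc : T),
     (2 <= k)%N -> #|T| = k.+1 -> hub_leaf h S Rc ->
     beff_star delta h S Rc = delta + fkd (k%:R) delta)
  /\ (forall x : R, 1 < x -> 0 < fkd x delta)
  /\ (forall x : R, 1 <= x ->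
        derivable (fun k : R => fkd k delta) x 1
        /\ 0 < derive1 (fun k : R => fkd k delta) x
        /\ derivable (derive1 (fun k : R => fkd k delta)) x 1
        /\ derive1n 2 (fun k : R => fkd k delta) x < 0)
  /\ (forall (T1 T2 : finType) (h1 S1 Rc1 : T1) (h2 S2 Rc2 : T2) (N1 N2 : nat),
        (3 <= #|T1|)%N -> (#|T1| <= #|T2|)%N ->
        hub_leaf h1 S1 Rc1 -> hub_leaf h2 S2 Rc2 ->
        isN (beff_star delta h1 S1 Rc1) N1 -> isN (beff_star delta h2 S2 Rc2) N2 ->
        (N2 <= N1)%N)
  /\ (forall (T1 T2 T3 : finType) (h1 S1 Rc1 : T1) (h2 S2 Rc2 : T2) (h3 S3 Rc3 : T3),
        (3 <= #|T1|)%N -> #|T2| = (#|T1|).+1 -> #|T3| = (#|T2|).+1 ->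
        hub_leaf h1 S1 Rc1 -> hub_leaf h2 S2 Rc2 -> hub_leaf h3 S3 Rc3 ->
        beff_star delta h3 S3 Rc3 - beff_star delta h2 S2 Rc2
        < beff_star delta h2 S2 Rc2 - beff_star delta h1 S1 Rc1).
Proof.
split=> [k T h S Rc k2 cardT hl|].
  by rewrite beff_star_card ?cardT.
split=> [x x1|]; first exact: fkd_gt0.
split=> [x x1|]; first exact: fkd_derivatives (lt_le_trans ltr01 x1).
split=> [T1 T2 h1 S1 Rc1 h2 S2 Rc2 N1 N2 T1_3 T12 hl1 hl2|].
  apply: isN_le; rewrite !beff_star_card ?(leq_trans T1_3 T12) // lerD2l.
  by apply: fkd_le; rewrite ?ltr0n ?ler_nat; lia.
move=> T1 T2 T3 h1 S1 Rc1 h2 S2 Rc2 h3 S3 Rc3 T1_3 T21 T32 hl1 hl2 hl3.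
have [n T1n] : exists n, #|T1| = n.+3 by exists (#|T1| - 3)%N; lia.
rewrite T1n in T21; rewrite T21 in T32.
rewrite !beff_star_card ?T1n ?T21 ?T32 //=.
have := fkd_increments_decrease hd0 (ltr0Sn R n.+1).
rewrite !natr1 -natrD addn2; lra.
Qed.
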